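(* Consider the local time-stepping Adams–Bashforth scheme of order $k$ described in the context, applied to $\frac{d\mathbf{y}}{dt}=\mathbf{D}(\mathbf{y})$. Let $\mathbf{c}\in\mathbb{R}^N$ satisfy $\mathbf{c}\cdot\mathbf{D}(\mathbf{y})=0$ for all $\mathbf{y}\in\mathbb{R}^N$ (a linear conserved quantity $C=\mathbf{c}\cdot\mathbf{y}$). Then $\mathbf{c}\cdot\Delta\tilde{\mathbf{y}}_n=0$ for every step index $n$. Consequently, writing $\mathbf{c}=(\mathbf{c}^1,\ldots,\mathbf{c}^S)$ according to the partition of the components, if $n_1<n_2$ are indices such that $\tilde t_{n_1}$ and $\tilde t_{n_2}$ are evaluation times of every set, i.e. $\tilde t_{n_1}=t^s_{p_s}$ and $\tilde t_{n_2}=t^s_{r_s}$ for all $s$, then $\sum_{s=1}^S \mathbf{c}^s\cdot\mathbf{y}^s_{r_s}=\sum_{s=1}^S\mathbf{c}^s\cdot\mathbf{y}^s_{p_s}$ exactly.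
   Context: We solve an autonomous system $\frac{d\mathbf{y}}{dt}=\mathbf{D}(\mathbf{y})$, $\mathbf{y}\in\mathbb{R}^N$, $\mathbf{D}:\mathbb{R}^N\to\mathbb{R}^N$. The components of $\mathbf{y}$ are partitioned into $S$ sets, $\mathbf{y}=(\mathbf{y}^1,\ldots,\mathbf{y}^S)$, and $\mathbf{D}^s$ denotes the components of $\mathbf{D}$ belonging to set $s$. Set $s$ is evaluated at strictly increasing times $t^s_0<t^s_1<\cdots$, and $\mathbf{y}^s_q$ denotes the numerical value of $\mathbf{y}^s$ at time $t^s_q$. Let $\tilde t_0<\tilde t_1<\cdots$ be the increasing enumeration of the union of all evaluation times of all sets, $\Delta\tilde t_n=\tilde t_{n+1}-\tilde t_n$. For each $s$ and $n$ let $m^s(n)$ be the index with $t^s_{m^s(n)}\le\tilde t_n<t^s_{m^s(n)+1}$, and for each $s,m$ let $n^s(m)$ be defined by $\tilde t_{n^s(m)}=t^s_m$. Lagrange polynomials: $\ell_j(t;\tau_0,\ldots,\tau_{k-1})=\prod_{i\ne j}\frac{t-\tau_i}{\tau_j-\tau_i}$. Adams–Bashforth coefficients for the merged sequence: $\tilde\alpha_{ni}=\frac{1}{\Delta\tilde t_n}\int_{\tilde t_n}^{\tilde t_{n+1}}\ell_i(t;\tilde t_n,\tilde t_{n-1},\ldots,\tilde t_{n-(k-1)})\,dt$. The scheme defines, for each $n$ (large enough that all indices below exist), $\Delta\tilde{\mathbf{y}}_n=\sum_{q^1=m^1(n)-(k-1)}^{m^1(n)}\cdots\sum_{q^S=m^S(n)-(k-1)}^{m^S(n)}\beta_{n;q^1\cdots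 q^S}\,\mathbf{D}(\mathbf{y}^1_{q^1},\ldots,\mathbf{y}^S_{q^S})$, with $\beta_{n;q^1\cdots q^S}=\Delta\tilde t_n\sum_{i=0}^{k-1}\tilde\alpha_{ni}\prod_{s=1}^S\ell_{m^s(n)-q^s}\big(\tilde t_{n-i};t^s_{m^s(n)},\ldots,t^s_{m^s(n)-(k-1)}\big)$, and the update of set $s$ from $t^s_m$ to $t^s_{m+1}$ is $\mathbf{y}^s_{m+1}=\mathbf{y}^s_m+\sum_{n=n^s(m)}^{n^s(m+1)-1}(\Delta\tilde{\mathbf{y}}_n)^s$, where $(\cdot)^s$ denotes the components belonging to set $s$. *)

From HB Require Import structures.
From mathcomp Require Import all_boot all_order all_algebra.
From mathcomp Require Import all_classical all_reals all_analysis.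
Set Implicit Arguments. Unset Strict Implicit. Unset Printing Implicit Defensive.
Import Order.TTheory GRing.Theory Num.Theory.
Import numFieldNormedType.Exports.
Local Open Scope classical_set_scope.
Local Open Scope ring_scope.

Definition lagr (R : realType) (k : nat) (tau : nat -> R) (j : nat) (t : R) : R :=
  \prod_(a < k | (a : nat) != j) ((t - tau a) / (tau j - tau a)).

Definition dotv (R : realType) (N : nat) (u v : 'I_N -> R) : R :=
  \sum_(i < N) u i * v i.

Definition ab_alpha (R : realType) (k : nat) (tt : nat -> R) (n i : nat) : R :=
  (tt n.+1 - tt n)^-1 *
  (\int[lebesgue_measure]_(t in `[tt n, tt n.+1]) lagr k (fun a => tt (n - a)%N) i t).

(* beta_{n; q^1 ... q^S}, where q^s = m^s(n) - j s, j s ranging over 0..k-1.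
   Note l_{m^s(n) - q^s} = l_{j s}, nodes tau_a = t^s_{m^s(n) - a}. *)
Definition lts_beta (R : realType) (S k : nat) (ts : 'I_S -> nat -> R)
    (tt : nat -> R) (ms : 'I_S -> nat -> nat) (n : nat)
    (j : {ffun 'I_S -> 'I_k}) : R :=
  (tt n.+1 - tt n) *
  \sum_(i < k) ab_alpha k tt n i *
     \prod_(s : 'I_S) lagr k (fun a => ts s (ms s n - a)%N) (j s) (tt (n - i)%N).

(* Delta y~_n, a vector of R^N.  Component l of the state argument of D is
   taken from the set part l, at its index q^(part l) = m^(part l)(n) - j (part l). *)
Definition lts_dy (R : realType) (N S k : nat) (part : 'I_N -> 'I_S)
    (D : ('I_N -> R) -> ('I_N -> R)) (ts : 'I_S -> nat -> R) (tt : nat -> R)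
    (ms : 'I_S -> nat -> nat) (Y : 'I_S -> nat -> ('I_N -> R)) (n : nat)
    : 'I_N -> R :=
  fun i => \sum_(j : {ffun 'I_S -> 'I_k})
     lts_beta ts tt ms n j *
     D (fun l => Y (part l) (ms (part l) n - j (part l))%N l) i.

From HB Require Import structures.
From mathcomp Require Import all_boot all_order all_algebra.
From mathcomp Require Import all_classical all_reals all_analysis.
Import Order.TTheory Order.NatMonotonyTheory GRing.Theory.
Local Open Scope ring_scope.

(* Each increment of the scheme is a linear combination of values of D, whatever
   its coefficients are, so it is orthogonal to c.  Between two synchronization
   times every set is advanced by the same increments of the merged sequence,
   hence c . y changes by c applied to their sum, which vanishes. *)

Section StrictlyIncreasing.

Context {disp : Order.disp_t} {T : porderType disp} {f : nat -> T}.
Hypothesis f_incr : forall n, (f n < f n.+1)%O.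

Lemma incr_ltn_mono : {mono f : m n / (m < n)%N >-> (m < n)%O}.
Proof. exact/leW_mono/le_mono/homo_ltn_lt. Qed.

Lemma incr_inj : injective f.
Proof. exact/inc_inj/le_mono/homo_ltn_lt. Qed.

End StrictlyIncreasing.

Lemma telescope_big_nat (V : nmodType) (g : nat -> nat) (y d : nat -> V)
    (p r : nat) :
  {homo g : m n / (m <= n)%N} -> (p <= r)%N ->
  (forall m, (p <= m < r)%N -> y m.+1 = y m + \sum_(g m <= n < g m.+1) d n) ->
  y r = y p + \sum_(g p <= n < g r) d n.
Proof.
move=> g_homo; elim: r => [|r IHr].
  by rewrite leqn0 => /eqP-> _; rewrite big_geq ?addr0.
rewrite leq_eqVlt => /predU1P[<- _|]; first by rewrite big_geq ?addr0.
rewrite ltnS => le_pr step.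
rewrite step ?le_pr ?ltnSn // IHr // => [|m /andP[le_pm lt_mr]]; last first.
  by rewrite step // le_pm ltnW.
by rewrite -addrA -big_cat_nat ?g_homo.
Qed.

Section ConservedQuantity.

Variables (R : realType) (N : nat) (c : 'I_N -> R).

Lemma dotv_sumr (I : Type) (r : seq I) (P : pred I) (F : I -> 'I_N -> R) :
  dotv c (fun i => \sum_(j <- r | P j) F j i) = \sum_(j <- r | P j) dotv c (F j).
Proof.
by rewrite /dotv; under eq_bigr do rewrite mulr_sumr; apply: exchange_big.
Qed.

Variable D : ('I_N -> R) -> ('I_N -> R).
Hypothesis c_conserved : forall y, dotv c (D y) = 0.

Lemma dotv_lincomb_eq0 (I : Type) (r : seq I) (P : pred I) (a : I -> R)
    (x : I -> 'I_N -> R) :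
  dotv c (fun i => \sum_(j <- r | P j) a j * D (x j) i) = 0.
Proof.
rewrite (@dotv_sumr _ r P (fun j i => a j * D (x j) i)) big1 // => j _.
have -> : dotv c (fun i => a j * D (x j) i) = a j * dotv c (D (x j)).
  by rewrite /dotv mulr_sumr; apply: eq_bigr => i _; rewrite mulrCA.
by rewrite c_conserved mulr0.
Qed.

Lemma dotv_lts_dy_eq0 (S k : nat) (part : 'I_N -> 'I_S) (ts : 'I_S -> nat -> R)
    (tt : nat -> R) (ms : 'I_S -> nat -> nat) (Y : 'I_S -> nat -> ('I_N -> R))
    (n : nat) :
  dotv c (lts_dy k part D ts tt ms Y n) = 0.
Proof. exact: dotv_lincomb_eq0. Qed.

End ConservedQuantity.

Theorem mainTheorem1 (R : realType) (N S k : nat) (part : 'I_N -> 'I_S)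
    (D : ('I_N -> R) -> ('I_N -> R)) (ts : 'I_S -> nat -> R) (tt : nat -> R)
    (ms : 'I_S -> nat -> nat) (ns : 'I_S -> nat -> nat)
    (Y : 'I_S -> nat -> ('I_N -> R)) (c : 'I_N -> R) :
  (0 < k)%N ->
  (* evaluation times of each set are strictly increasing *)
  (forall s m, ts s m < ts s m.+1) ->
  (* tt is the increasing enumeration of the union of all evaluation times *)
  (forall n, tt n < tt n.+1) ->
  (forall n, exists s m, tt n = ts s m) ->
  (forall s m, exists n, tt n = ts s m) ->
  (* m^s(n) *)
  (forall s n, ts s 0%N <= tt n -> ts s (ms s n) <= tt n < ts s (ms s n).+1) ->
  (* n^s(m) *)
  (forall s m, tt (ns s m) = ts s m) ->
  (* linear conserved quantity *)
  (forall y, dotv c (D y) = 0) ->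
  (forall n, dotv c (lts_dy k part D ts tt ms Y n) = 0) /\
  (forall (n1 n2 : nat) (p r : 'I_S -> nat), (n1 < n2)%N ->
     (forall s, tt n1 = ts s (p s) /\ tt n2 = ts s (r s)) ->
     (* the scheme's update of every set between these synchronization times *)
     (forall s m i, (p s <= m < r s)%N -> part i = s ->
        Y s m.+1 i = Y s m i +
          \sum_(ns s m <= n < ns s m.+1) lts_dy k part D ts tt ms Y n i) ->
     \sum_(s : 'I_S) \sum_(i < N | part i == s) c i * Y s (r s) i =
     \sum_(s : 'I_S) \sum_(i < N | part i == s) c i * Y s (p s) i).
Proof.
move=> _ ts_incr tt_incr _ _ _ tt_ns c_conserved.
split=> [n|n1 n2 p r lt_n12 sync step]; first exact: dotv_lts_dy_eq0.
set dy := lts_dy k part D ts tt ms Y.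
have ns_homo s : {homo ns s : m n / (m <= n)%N}.
  by apply: nondecnP => m; apply: ltnW; rewrite -(incr_ltn_mono tt_incr) !tt_ns.
have ns_p s : ns s (p s) = n1 by apply: (incr_inj tt_incr); rewrite tt_ns (sync s).1.
have ns_r s : ns s (r s) = n2 by apply: (incr_inj tt_incr); rewrite tt_ns (sync s).2.
have le_pr s : (p s <= r s)%N.
  by apply: ltnW; rewrite -(incr_ltn_mono (ts_incr s)) -(sync s).1 -(sync s).2
    (incr_ltn_mono tt_incr).
have Y_r s i : part i = s ->
    Y s (r s) i = Y s (p s) i + \sum_(n1 <= n < n2) dy n i.
  move=> part_i; rewrite -(ns_p s) -(ns_r s).
  apply: (@telescope_big_nat _ _ (fun m => Y s m i)) => // m m_range.
  exact: step m_range part_i.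
have sum_dy_conserved : dotv c (fun i => \sum_(n1 <= n < n2) dy n i) = 0.
  by rewrite dotv_sumr big1 // => n _; apply: dotv_lts_dy_eq0.
rewrite -[RHS]addr0 -[X in _ + X]sum_dy_conserved /dotv.
rewrite [X in _ + X](partition_big part xpredT) //=.
rewrite -big_split; apply: eq_bigr => s _ /=; rewrite -big_split.
by apply: eq_bigr => i /eqP part_i; rewrite Y_r // mulrDr.
Qed.
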